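(* For all $n\geq 1$, \[\bar{a}_2(n)=2\bar{p}(n)-\bar{p}(n+1)+\bar{u}(n+1),\] where $\bar{u}(N)$ is the number of overpartitions of $N$ such that: (1) $1$ is not a part; (2) the smallest part is overlined and no other part has the same value; (3) the values of the largest and second largest parts are either equal, or consecutive with the second largest part overlined.
   Context: An overpartition of $n$ is a partition of $n$ in which the first occurrence of each distinct part value may be overlined. $\bar{p}(n)$ is the number of overpartitions of $n$. $\bar{a}_m(n)$ is the number of overpartitions of $n$ in which the smallest part value occurs at least $m$ times, where an overlined part and a non-overlined part of the same value are counted as equal (e.g. $\bar{1}+1$ has smallest part $1$ occurring twice). *)

From mathcomp Require Import all_boot all_algebra.
Set Implicit Arguments. Unset Strict Implicit. Unset Printing Implicit Defensive.

(** An overpartition is represented canonically as a list of parts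
    [(value, overlined)], listed in nonincreasing order of value, where among
    the parts of equal value only the first one (the first occurrence) may be
    overlined. *)
Definition ov_rel (x y : nat * bool) : bool :=
  (y.1 < x.1) || ((x.1 == y.1) && ~~ y.2).

Definition is_overpartition (n : nat) (s : seq (nat * bool)) : bool :=
  [&& sorted ov_rel s, all (fun p => 0 < p.1) s & sumn [seq p.1 | p <- s] == n].

(** A finite superset of all overpartitions of n: lists of length <= n with
    entries in {1..n} x bool. *)
Definition alphabet (n : nat) : seq (nat * bool) :=
  [seq (v, b) | v <- iota 1 n, b <- [:: false; true]].

Fixpoint seqs_upto {T : Type} (A : seq T) (k : nat) : seq (seq T) :=
  [::] :: (if k is k'.+1 then [seq a :: s | a <- A, s <- seqs_upto A k'] else [::]).

Definition overpartitions (n : nat) : seq (seq (nat * bool)) :=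
  [seq s <- undup (seqs_upto (alphabet n) n) | is_overpartition n s].

Definition pbar (n : nat) : nat := size (overpartitions n).

(** smallest part value (the list is nonincreasing, so it is the last one) *)
Definition smallest_value (s : seq (nat * bool)) : nat := last 0 [seq p.1 | p <- s].

Definition mult_smallest (s : seq (nat * bool)) : nat :=
  count (fun p => p.1 == smallest_value s) s.

Definition abar (m n : nat) : nat :=
  count (fun s => m <= mult_smallest s) (overpartitions n).

Definition ubar_cond (s : seq (nat * bool)) : bool :=
  [&& (1, false) \notin s,
      (last (0, false) s).2 && (mult_smallest s == 1) &
      match s with
      | x :: y :: _ => (x.1 == y.1) || ((x.1 == y.1.+1) && y.2)
      | _ => false
      end].

Definition ubar (N : nat) : nat := count ubar_cond (overpartitions N).

From mathcomp Require Import all_boot all_algebra.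
From mathcomp Require Import zify.

Set Implicit Arguments. Unset Strict Implicit.

(* Write b(n) for the number of overpartitions of n whose smallest part is
   overlined (that part is then the only one of its value).  Toggling the
   overline of the smallest part shows that exactly 2 b(n) overpartitions of n
   have a smallest part of multiplicity one, so abar_2(n) = pbar(n) - 2 b(n).
   An overpartition of n+1 whose smallest part v is not overlined either has
   v = 1, and deleting that part leaves an overpartition of n, or v > 1, and
   replacing it by an overlined v-1 gives an overpartition counted by b(n);
   hence pbar(n+1) = b(n+1) + pbar(n) + b(n).  Finally, raising the largest part
   by one maps the overpartitions counted by b(n) onto those counted by b(n+1)
   that violate condition (3), so b(n+1) = ubar(n+1) + b(n).  Eliminating b
   gives the identity. *)

Lemma count_bij (T1 T2 : eqType) (r1 : seq T1) (r2 : seq T2)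
    (P1 : pred T1) (P2 : pred T2) (f : T1 -> T2) (g : T2 -> T1) :
  uniq r1 -> uniq r2 ->
  {in r1, forall x, P1 x -> [/\ f x \in r2, P2 (f x) & g (f x) = x]} ->
  {in r2, forall y, P2 y -> [/\ g y \in r1, P1 (g y) & f (g y) = y]} ->
  count P1 r1 = count P2 r2.
Proof.
move=> uniq_r1 uniq_r2 fP gP; rewrite -!size_filter -(size_map f).
apply/perm_size/uniq_perm; last first.
- move=> y; apply/mapP/idP => [[x] | ].
    by rewrite mem_filter => /andP [P1x /fP] [//| fx_r2 P2fx _] ->; rewrite mem_filter P2fx.
  rewrite mem_filter => /andP [P2y /gP] [//| gy_r1 P1gy fgy].
  by exists (g y); rewrite ?mem_filter ?P1gy.
- exact: filter_uniq.
rewrite map_inj_in_uniq ?filter_uniq // => x x'; rewrite !mem_filter.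
move=> /andP [P1x /fP [//|_ _ gfx]] /andP [P1x' /fP [//|_ _ gfx']] fxx'.
by rewrite -gfx -gfx' fxx'.
Qed.

Lemma size_le_sumn_pos (s : seq (nat * bool)) :
  all (fun p => 0 < p.1) s -> size s <= sumn [seq p.1 | p <- s].
Proof. by elim: s => //= x s IHs /andP [x_gt0 /IHs]; lia. Qed.

Lemma part_le_sumn (s : seq (nat * bool)) p :
  p \in s -> p.1 <= sumn [seq p.1 | p <- s].
Proof.
elim: s => //= x s IHs; rewrite inE => /orP [/eqP -> | /IHs]; lia.
Qed.

Lemma mem_seqs_upto (T : eqType) (A : seq T) k s :
  size s <= k -> all (mem A) s -> s \in seqs_upto A k.
Proof.
elim: k s => [|k IHk] [|a s] //= s_le /andP [a_A s_A].
by rewrite inE (allpairs_f (fun a s => a :: s)) ?orbT ?IHk.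
Qed.

Lemma mem_overpartitions n s : (s \in overpartitions n) = is_overpartition n s.
Proof.
rewrite mem_filter andb_idr // mem_undup => /and3P [_ pos_s /eqP sum_s].
apply: mem_seqs_upto; first by rewrite -sum_s size_le_sumn_pos.
apply/allP => -[v b] p_s; have v_le := part_le_sumn p_s.
have /= v_gt0 := allP pos_s _ p_s.
apply: (allpairs_f (fun v b => (v, b))); last by case: (b).
rewrite mem_iota; move: v_le; rewrite sum_s /=; lia.
Qed.

Lemma overpartitions_uniq n : uniq (overpartitions n).
Proof. by rewrite filter_uniq // undup_uniq. Qed.

Lemma count_overpartitions_bij m n (P Q : pred (seq (nat * bool))) f g :
  (forall s, is_overpartition m s -> P s ->
     [/\ is_overpartition n (f s), Q (f s) & g (f s) = s]) ->
  (forall s, is_overpartition n s -> Q s ->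
     [/\ is_overpartition m (g s), P (g s) & f (g s) = s]) ->
  count P (overpartitions m) = count Q (overpartitions n).
Proof.
move=> fP gP; apply: (@count_bij _ _ _ _ P Q f g); rewrite ?overpartitions_uniq // => s.
  by rewrite !mem_overpartitions => /fP.
by rewrite !mem_overpartitions => /gP.
Qed.

Lemma ov_relE p q : ov_rel p q = if q.2 then q.1 < p.1 else q.1 <= p.1.
Proof. by case: p q => [u a] [v []] /=; rewrite /ov_rel /= ?andbF ?andbT; lia. Qed.

Lemma ov_rel_trans : transitive ov_rel.
Proof. by move=> q p r; rewrite !ov_relE; case: q.2; case: r.2 => /=; lia. Qed.

Lemma is_overpartition_cons n x s :
  is_overpartition n (x :: s) =
  [&& is_overpartition (n - x.1) s, x.1 <= n, 0 < x.1 & path ov_rel x s].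
Proof.
apply/and3P/and4P => [[xs_path /andP [x_gt0 s_pos] /eqP /= sum_xs] |
                      [/and3P [_ s_pos /eqP sum_s] x_le x_gt0 xs_path]].
  split=> //; last by lia.
  by apply/and3P; split; [exact: path_sorted xs_path | exact: s_pos | apply/eqP; lia].
by split; rewrite //= ?x_gt0 //; apply/eqP; lia.
Qed.

Lemma sorted_ov_rel_rcons s z :
  sorted ov_rel (rcons s z) = sorted ov_rel s && all (ov_rel^~ z) s.
Proof.
rewrite -[LHS](rev_sorted (fun x y => ov_rel y x)) rev_rcons /=.
by rewrite (path_sortedE (rev_trans ov_rel_trans)) all_rev rev_sorted andbC.
Qed.

Lemma is_overpartition_rcons n s z :
  is_overpartition n (rcons s z) =
  [&& is_overpartition (n - z.1) s, z.1 <= n, 0 < z.1 & all (ov_rel^~ z) s].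
Proof.
rewrite /is_overpartition sorted_ov_rel_rcons all_rcons map_rcons sumn_rcons.
apply/and3P/and4P => [[/andP [s_sorted s_z] /andP [z_gt0 s_pos] /eqP sum_sz] |
                      [/and3P [s_sorted s_pos /eqP sum_s] z_le z_gt0 s_z]].
  split=> //; last by lia.
  by apply/and3P; split; [exact: s_sorted | exact: s_pos | apply/eqP; lia].
by split; rewrite ?s_sorted ?s_z ?z_gt0 //; apply/eqP; lia.
Qed.

Lemma count_predI_predC (T : Type) (a b : pred T) s :
  count (fun x => a x && b x) s + count (fun x => a x && ~~ b x) s = count a s.
Proof. by elim: s => //= x s <-; case: (a x); case: (b x) => /=; lia. Qed.

Section SeqEnds.
Variable T : Type.

Definition map_head (h : T -> T) (s : seq T) : seq T :=
  if s is x :: s' then h x :: s' else s.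

Fixpoint map_last (h : T -> T) (s : seq T) : seq T :=
  if s is x :: s' then (if s' is [::] then [:: h x] else x :: map_last h s')
  else [::].

Lemma map_last_rcons h s z : map_last h (rcons s z) = rcons s (h z).
Proof. by elim: s => //= x s ->; case: s. Qed.

Definition droplast (s : seq T) : seq T := take (size s).-1 s.

Lemma droplast_rcons s z : droplast (rcons s z) = s.
Proof. by rewrite /droplast size_rcons -cats1 take_size_cat. Qed.

End SeqEnds.

Definition smallest_overlined (s : seq (nat * bool)) : bool := (last (0, false) s).2.

Definition pbar_overlined_smallest (n : nat) : nat :=
  count smallest_overlined (overpartitions n).

Definition top_two_adjacent (s : seq (nat * bool)) : bool :=
  if s is x :: y :: _ then (x.1 == y.1) || ((x.1 == y.1.+1) && y.2) else false.

Lemma smallest_overlined_rcons s z : smallest_overlined (rcons s z) = z.2.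
Proof. by rewrite /smallest_overlined last_rcons. Qed.

Lemma smallest_value_rcons s z : smallest_value (rcons s z) = z.1.
Proof. by rewrite /smallest_value map_rcons last_rcons. Qed.

Lemma mult_smallest_rcons s z :
  mult_smallest (rcons s z) = (count (fun p => p.1 == z.1) s).+1.
Proof.
by rewrite /mult_smallest smallest_value_rcons -cats1 count_cat /= eqxx addn1.
Qed.

Lemma mult_smallest_rcons_eq1 n s z : is_overpartition n (rcons s z) ->
  (mult_smallest (rcons s z) == 1) = all (fun p => z.1 < p.1) s.
Proof.
rewrite is_overpartition_rcons mult_smallest_rcons eqSS eqn0Ngt -has_count.
move=> /and4P [_ _ _ /allP s_z]; rewrite -all_predC; apply: eq_in_all => p /s_z.
by rewrite ov_relE /=; case: z.2; lia.
Qed.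

Lemma mult_smallest_gt0 n s : 0 < n -> is_overpartition n s -> 0 < mult_smallest s.
Proof.
case/lastP: s => [|s z]; last by rewrite mult_smallest_rcons.
by rewrite /is_overpartition /=; lia.
Qed.

Lemma mult_smallest_overlined n s :
  is_overpartition n s -> smallest_overlined s -> mult_smallest s == 1.
Proof.
case/lastP: s => [|s z] // s_ov; rewrite smallest_overlined_rcons (mult_smallest_rcons_eq1 s_ov).
move: s_ov; rewrite is_overpartition_rcons => /and4P [_ _ _ s_z] z_bar.
by apply: sub_all s_z => p; rewrite ov_relE z_bar.
Qed.

Lemma plain_one_notin_overlined n s :
  is_overpartition n s -> smallest_overlined s -> (1, false) \notin s.
Proof.
case/lastP: s => [|s [v b]] //; rewrite smallest_overlined_rcons /=; case: b => //.
rewrite is_overpartition_rcons => /and4P [_ _ v_gt0 /allP s_z] _.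
rewrite mem_rcons in_cons xpair_eqE andbF /=; apply/negP => /s_z.
by rewrite ov_relE /=; move: v_gt0 => /=; lia.
Qed.

Lemma is_overpartition_rcons_overline n s v :
  is_overpartition n (rcons s (v, true)) =
  is_overpartition n (rcons s (v, false)) && all (fun p => v < p.1) s.
Proof.
rewrite !is_overpartition_rcons.
apply/and4P/andP => [[s_ov v_le v_gt0 s_v] | [/and4P [s_ov v_le v_gt0 _] s_v]].
  have s_gt : all (fun p => v < p.1) s by apply: sub_all s_v => p; rewrite ov_relE.
  split=> //; apply/and4P; split=> //.
  by apply: sub_all s_gt => p; rewrite ov_relE /=; apply: ltnW.
by split=> //; apply: sub_all s_v => p; rewrite ov_relE.
Qed.

Lemma is_overpartition_rcons_one n s :
  is_overpartition n.+1 (rcons s (1, false)) = is_overpartition n s.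
Proof.
rewrite is_overpartition_rcons subn1 /=; apply/andP/idP => [[] // | s_ov].
split=> //; move: s_ov => /and3P [_ s_pos _].
by apply: sub_all s_pos => p; rewrite ov_relE.
Qed.

Lemma is_overpartition_rcons_lower n s w : 0 < w ->
  is_overpartition n.+1 (rcons s (w.+1, false)) = is_overpartition n (rcons s (w, true)).
Proof.
move=> w_gt0; rewrite !is_overpartition_rcons /= subSS ltnS w_gt0.
have rel_eq : ov_rel^~ (w.+1, false) =1 ov_rel^~ (w, true) by move=> p; rewrite !ov_relE.
by rewrite (eq_all rel_eq).
Qed.

Lemma ov_rel_lower_head a b y :
  ov_rel (a.+1, b) y && ~~ ((a.+1 == y.1) || ((a.+1 == y.1.+1) && y.2)) = ov_rel (a, b) y.
Proof. by case: y => c []; rewrite !ov_relE /=; lia. Qed.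

Lemma count_mult1_plain_smallest n :
  count (fun s => (mult_smallest s == 1) && ~~ smallest_overlined s) (overpartitions n)
  = pbar_overlined_smallest n.
Proof.
pose toggle_last := map_last (fun p : nat * bool => (p.1, ~~ p.2)).
apply: (@count_overpartitions_bij n n _ _ toggle_last toggle_last);
  case/lastP => [|s [v b]] //; rewrite /toggle_last !map_last_rcons /= negbK.
- case: b => s_ov; rewrite smallest_overlined_rcons /= ?andbF // andbT.
  rewrite (mult_smallest_rcons_eq1 s_ov) => s_gt.
  by rewrite is_overpartition_rcons_overline s_ov s_gt smallest_overlined_rcons.
- rewrite smallest_overlined_rcons; case: b => //.
  rewrite is_overpartition_rcons_overline => /andP [s_ov s_gt] _.
  by rewrite (mult_smallest_rcons_eq1 s_ov) s_gt s_ov smallest_overlined_rcons.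
Qed.

Lemma count_overlined_smallest_not_adjacent n : 0 < n ->
  count (fun s => smallest_overlined s && ~~ top_two_adjacent s) (overpartitions n.+1)
  = pbar_overlined_smallest n.
Proof.
move=> n_gt0; symmetry.
apply: (@count_overpartitions_bij n n.+1 _ _
          (map_head (fun p => (p.1.+1, p.2))) (map_head (fun p => (p.1.-1, p.2)))).
- case=> [|[a b] [|y s]] //; rewrite !(is_overpartition_cons _ (_, _)) /smallest_overlined /=.
    by rewrite subSS ltnS => /and4P [-> -> _ _] ->.
  rewrite subSS ltnS => /and4P [-> -> _ /andP [rel_ay ->]] ->.
  by rewrite -ov_rel_lower_head in rel_ay; case/andP: rel_ay => -> ->.
- case=> [|[[|a] b] [|y s]] //; rewrite !(is_overpartition_cons _ (_, _)) /smallest_overlined /=;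
    rewrite ?subSS ?ltnS ?andbF ?andbT //.
  + move=> /andP [s_ov a_le] ->.
    have a_eq : a = n by move: s_ov a_le; rewrite /is_overpartition /=; lia.
    by rewrite a_eq subnn leqnn n_gt0.
  + move=> /and4P [s_ov a_le rel_ay ->] /andP [-> not_adj].
    have rel_ay' : ov_rel (a, b) y by rewrite -ov_rel_lower_head rel_ay.
    have /and3P [_ /andP [y_gt0 _] _] := s_ov.
    have a_gt0 : 0 < a by move: rel_ay'; rewrite ov_relE /=; case: y.2; lia.
    by rewrite s_ov a_le a_gt0 rel_ay'.
Qed.

Lemma count_plain_smallest_one n :
  count (fun s => ~~ smallest_overlined s && (smallest_value s == 1)) (overpartitions n.+1)
  = pbar n.
Proof.
rewrite /pbar -count_predT; symmetry.
apply: (@count_overpartitions_bij n n.+1 _ _ (rcons^~ (1, false)) (@droplast _)) => [s s_ov _ | ].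
  by rewrite is_overpartition_rcons_one smallest_overlined_rcons smallest_value_rcons droplast_rcons.
case/lastP=> [|s [v b]] //; rewrite smallest_overlined_rcons smallest_value_rcons droplast_rcons /=.
by case: b => //; move=> + /eqP v1; rewrite v1 is_overpartition_rcons_one.
Qed.

Lemma count_plain_smallest_gt1 n :
  count (fun s => ~~ smallest_overlined s && (smallest_value s != 1)) (overpartitions n.+1)
  = pbar_overlined_smallest n.
Proof.
apply: (@count_overpartitions_bij n.+1 n _ _
          (map_last (fun p => (p.1.-1, true))) (map_last (fun p => (p.1.+1, false))));
  case/lastP=> [|s [v b]] //; rewrite !map_last_rcons smallest_overlined_rcons /=.
- case: b => //; case: v => [|w] s_ov; first by move: s_ov; rewrite is_overpartition_rcons /= !andbF.
  rewrite smallest_value_rcons /= => w_ne0.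
  by rewrite -is_overpartition_rcons_lower ?smallest_overlined_rcons; case: w w_ne0 s_ov.
- case: b => // s_ov _; have w_gt0 : 0 < v.
    by move: s_ov; rewrite is_overpartition_rcons => /and4P [].
  by rewrite is_overpartition_rcons_lower // smallest_overlined_rcons smallest_value_rcons /= -lt0n.
Qed.

Lemma abar2_add_count_mult1 n : 0 < n ->
  abar 2 n + count (fun s => mult_smallest s == 1) (overpartitions n) = pbar n.
Proof.
move=> n_gt0; rewrite /abar /pbar -(count_predC (fun s => mult_smallest s == 1)) addnC.
congr (_ + _); apply: eq_in_count => s; rewrite mem_overpartitions => s_ov /=.
by have := mult_smallest_gt0 n_gt0 s_ov; case: (mult_smallest s) => [|[|m]].
Qed.

Lemma count_mult1 n :
  count (fun s => mult_smallest s == 1) (overpartitions n) = 2 * pbar_overlined_smallest n.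
Proof.
rewrite -(count_predI_predC _ smallest_overlined) count_mult1_plain_smallest mul2n -addnn.
congr (_ + _); apply: eq_in_count => s; rewrite mem_overpartitions => s_ov /=.
by rewrite andbC; apply: andb_idr; apply: mult_smallest_overlined s_ov.
Qed.

Lemma ubarE N :
  ubar N = count (fun s => smallest_overlined s && top_two_adjacent s) (overpartitions N).
Proof.
apply: eq_in_count => s; rewrite mem_overpartitions /ubar_cond -/(smallest_overlined s) => s_ov.
have [s_bar | _] := boolP (smallest_overlined s); last by rewrite /= andbF.
by rewrite (plain_one_notin_overlined s_ov s_bar) (mult_smallest_overlined s_ov s_bar).
Qed.

Lemma pbar_overlined_smallest_succ n : 0 < n ->
  pbar_overlined_smallest n.+1 = ubar n.+1 + pbar_overlined_smallest n.
Proof.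
move=> n_gt0; rewrite ubarE -(count_overlined_smallest_not_adjacent n_gt0).
by rewrite count_predI_predC.
Qed.

Lemma pbar_succ n :
  pbar n.+1 = pbar_overlined_smallest n.+1 + pbar n + pbar_overlined_smallest n.
Proof.
rewrite -(count_plain_smallest_one n) -(count_plain_smallest_gt1 n) -addnA count_predI_predC.
by rewrite /pbar -(count_predC smallest_overlined).
Qed.

Import GRing.Theory.
Local Open Scope ring_scope.

Theorem theorem5p1 (n : nat) : (1 <= n)%N ->
  (abar 2 n)%:Z = 2 * (pbar n)%:Z - (pbar n.+1)%:Z + (ubar n.+1)%:Z.
Proof.
move=> n_gt0.
have := abar2_add_count_mult1 n_gt0; have := count_mult1 n.
have := pbar_overlined_smallest_succ n_gt0; have := pbar_succ n.
lia.
Qed.
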